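(* Let $A\in\mathbb R^{n\times p}$ and $B\in\mathbb R^{n\times q}$ have columns $a_1,\dots,a_p$ and $b_1,\dots,b_q$ respectively. Let \[C=[a_1\circ b_1,\ a_1\circ b_2,\ \dots,\ a_2\circ b_1,\ \dots,\ a_p\circ b_q]\in\mathbb R^{n\times pq},\] \[\phi:\mathbb R^n\to\mathbb R^n,\ d\mapsto \operatorname{diag}(AA'\operatorname{diag}^*(d)BB'),\qquad \psi:\mathbb R^{p\times q}\to\mathbb R^n,\ \Delta\mapsto\operatorname{diag}(A\Delta B').\] Then $\mathcal R(\phi)=\mathcal R(\psi)=\mathcal R((AA')\circ(BB'))=\mathcal R(C)$.
   Context: $\circ$ denotes the entrywise (Schur) product of vectors or matrices. $\operatorname{diag}:\mathbb R^{n\times n}\to\mathbb R^n$ maps a matrix to the vector of its diagonal entries, and $\operatorname{diag}^*:\mathbb R^n\to\mathbb R^{n\times n}$ maps a vector $d$ to the diagonal matrix with diagonal $d$. $\mathcal R(\cdot)$ denotes the range (image) of a linear map or matrix. *)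

From mathcomp Require Import all_boot all_order all_algebra.
Set Implicit Arguments. Unset Strict Implicit. Unset Printing Implicit Defensive.
Import GRing.Theory Num.Theory.
Local Open Scope ring_scope.

Definition mdiag {R : ringType} {n : nat} (M : 'M[R]_n) : 'cV[R]_n :=
  \col_i M i i.

Definition mdiag_star {R : ringType} {n : nat} (d : 'cV[R]_n) : 'M[R]_n :=
  diag_mx d^T.

Definition schur {R : ringType} {m n : nat} (M N : 'M[R]_(m, n)) : 'M[R]_(m, n) :=
  \matrix_(i, j) (M i j * N i j).

(* C = [a_1 o b_1, a_1 o b_2, ..., a_p o b_q]: column number
   mxvec_index i j (= i*q + j) is a_i o b_j. *)
Definition khatri_C {R : ringType} {n p q : nat}
  (A : 'M[R]_(n, p)) (B : 'M[R]_(n, q)) : 'M[R]_(n, p * q) :=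
  \matrix_(k, l) (mxvec (\matrix_(i < p, j < q) (A k i * B k j)) 0 l).

Definition phi_map {R : ringType} {n p q : nat}
  (A : 'M[R]_(n, p)) (B : 'M[R]_(n, q)) (d : 'cV[R]_n) : 'cV[R]_n :=
  mdiag (A *m A^T *m mdiag_star d *m B *m B^T).

Definition psi_map {R : ringType} {n p q : nat}
  (A : 'M[R]_(n, p)) (B : 'M[R]_(n, q)) (D : 'M[R]_(p, q)) : 'cV[R]_n :=
  mdiag (A *m D *m B^T).

Definition range_of {X Y : Type} (f : X -> Y) (y : Y) : Prop :=
  exists x, f x = y.

Definition mx_range {R : ringType} {m k : nat} (M : 'M[R]_(m, k))
  (v : 'cV[R]_m) : Prop :=
  exists x : 'cV[R]_k, M *m x = v.

(* Every map involved factors through the Khatri-Rao matrix C: the entries of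
   diag (A D B') are the rows of C applied to vec D, and the Schur product
   (AA') o (BB') is the Gram matrix C C'.  So R(psi) = R(C) and
   R(phi) = R(C C'), and over an ordered field R(C C') = R(C) because
   u C C' = 0 forces (u C)(u C)' = 0, hence u C = 0. *)
From mathcomp Require Import all_boot all_order all_algebra.
From mathcomp Require Import ring zify.
Set Implicit Arguments. Unset Strict Implicit. Unset Printing Implicit Defensive.
Import GRing.Theory Num.Theory.
Local Open Scope ring_scope.

Lemma sum_mxvec_index (V : nmodType) p q (F : 'I_(p * q) -> V)
    (G : 'I_p -> 'I_q -> V) :
  (forall i j, F (mxvec_index i j) = G i j) ->
  \sum_l F l = \sum_i \sum_j G i j.
Proof.
move=> FG; rewrite (reindex _ (curry_mxvec_bij _ _)) /= pair_bigA.
by apply: eq_bigr => [[i j]] _ /=; rewrite FG.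
Qed.

Section KhatriRao.
Variables (R : comNzRingType) (n p q : nat) (A : 'M[R]_(n, p)) (B : 'M[R]_(n, q)).

Lemma khatri_CE k i j : khatri_C A B k (mxvec_index i j) = A k i * B k j.
Proof. by rewrite mxE mxvecE mxE. Qed.

Lemma psi_mapE D : psi_map A B D = khatri_C A B *m (mxvec D)^T.
Proof.
apply/colP => k; rewrite !mxE.
rewrite (sum_mxvec_index (G := fun i j => A k i * B k j * D i j)); last first.
  by move=> i j; rewrite khatri_CE !mxE mxvecE.
rewrite exchange_big; apply: eq_bigr => j _; rewrite mxE big_distrl /=.
by apply: eq_bigr => i _; rewrite !mxE; ring.
Qed.

Lemma schur_gram_khatri :
  schur (A *m A^T) (B *m B^T) = khatri_C A B *m (khatri_C A B)^T.
Proof.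
apply/matrixP => k l; rewrite !mxE.
rewrite (sum_mxvec_index (G := fun i j => A k i * B k j * (A l i * B l j)));
  last by move=> i j; rewrite [X in _ * X]mxE !khatri_CE.
rewrite big_distrl /=; apply: eq_bigr => i _; rewrite big_distrr /=.
by apply: eq_bigr => j _; rewrite !mxE; ring.
Qed.

Lemma phi_mapE d : phi_map A B d = schur (A *m A^T) (B *m B^T) *m d.
Proof.
apply/colP => k; rewrite /phi_map /mdiag /mdiag_star.
have -> : A *m A^T *m diag_mx d^T *m B *m B^T =
    A *m A^T *m (diag_mx d^T *m (B *m B^T)) by rewrite !mulmxA.
rewrite mul_diag_mx !mxE.
apply: eq_bigr => l _; rewrite !mxE.
have -> : \sum_j B l j * B^T j k = \sum_j B k j * B^T j l.
  by apply: eq_bigr => j _; rewrite !mxE mulrC.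
ring.
Qed.

End KhatriRao.

Lemma mulmx_trmx_self_eq0 (R : realDomainType) m (w : 'rV[R]_m) :
  w *m w^T = 0 -> w = 0.
Proof.
move=> /matrixP /(_ 0 0); rewrite !mxE => wwT0.
have /psumr_eq0P sq0 : \sum_j w 0 j ^+ 2 = 0.
  by rewrite -[RHS]wwT0; apply: eq_bigr => j _; rewrite mxE expr2.
apply/rowP => j; rewrite mxE; apply/eqP; rewrite -sqrf_eq0 sq0 //.
by move=> l _; apply: sqr_ge0.
Qed.

Section Gram.
Variables (R : realFieldType) (n m : nat) (C : 'M[R]_(n, m)).

Lemma kermx_gram_sub : (kermx (C *m C^T) <= kermx C)%MS.
Proof.
apply/row_subP => i; apply/sub_kermxP.
set u := row i _.
have uCCt0 : u *m (C *m C^T) = 0 by rewrite /u -row_mul mulmx_ker row0.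
by apply: mulmx_trmx_self_eq0; rewrite trmx_mul mulmxA -(mulmxA u) uCCt0 mul0mx.
Qed.

Lemma gram_eqmx : (C *m C^T == C^T)%MS.
Proof.
have sub_tr : (C *m C^T <= C^T)%MS by apply: submxMl.
rewrite -(mxrank_leqif_eq sub_tr) eqn_leq mxrankS //= mxrank_tr.
have := mxrankS kermx_gram_sub; rewrite !mxrank_ker.
have := rank_leq_row (C *m C^T); have := rank_leq_row C; lia.
Qed.

End Gram.

Lemma mx_rangeP (R : fieldType) k l (M : 'M[R]_(k, l)) v :
  mx_range M v <-> (v^T <= M^T)%MS.
Proof.
split=> [[x <-]|/submxP [x vT]]; first by rewrite trmx_mul submxMl.
by exists x^T; apply: trmx_inj; rewrite trmx_mul trmxK vT.
Qed.

Theorem lemma6 (R : realFieldType) (n p q : nat)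
  (A : 'M[R]_(n, p)) (B : 'M[R]_(n, q)) :
  (forall v : 'cV[R]_n, range_of (phi_map A B) v <-> range_of (psi_map A B) v) /\
  (forall v : 'cV[R]_n, range_of (psi_map A B) v <->
                         mx_range (schur (A *m A^T) (B *m B^T)) v) /\
  (forall v : 'cV[R]_n, mx_range (schur (A *m A^T) (B *m B^T)) v <->
                         mx_range (khatri_C A B) v).
Proof.
set C := khatri_C A B.
have range_schur v : mx_range (schur (A *m A^T) (B *m B^T)) v <-> mx_range C v.
  rewrite schur_gram_khatri !mx_rangeP trmx_mul trmxK.
  by rewrite (eqmxP (gram_eqmx C)).
have range_phi v : range_of (phi_map A B) v <->
                   mx_range (schur (A *m A^T) (B *m B^T)) v.
  by split=> [[d <-]|[d <-]]; exists d; rewrite phi_mapE.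
have range_psi v : range_of (psi_map A B) v <-> mx_range C v.
  split=> [[D <-]|[x <-]]; first by exists (mxvec D)^T; rewrite psi_mapE.
  by exists (vec_mx x^T); rewrite psi_mapE vec_mxK trmxK.
split; last split => v.
- by move=> v; rewrite range_phi range_schur range_psi.
- by rewrite range_schur range_psi.
- exact: range_schur.
Qed.
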